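(* For any GSSE queueing system with reward $r(q)=-\sum_i q_i$ whose arrival rate vector satisfies the stability condition with some slack $\epsilon>0$, the relative value function of the MaxWeight policy satisfies: there exist constants $c_0>0$, $c_1\ge0$ such that $$V_{MW}(q)\ \ge\ -c_0\,\hat r_{\max}(q)^2-c_1=-c_0\Big(\sum_i q_i\Big)^2-c_1\qquad\text{for all states }q.$$
   Context: GSSE: $n$ job classes, state $q\in\mathbb Z_{\ge0}^n$, discrete time. Each step $v_i(t)$ class-$i$ jobs arrive (bounded, i.i.d. over time, independent across classes, mean $\lambda_i$); the policy chooses one of $m$ service options $j$, serving $w_i^j(t)$ class-$i$ jobs (bounded, i.i.d., independent, mean $\mu_i^j$); $q_i(t+1)=(q_i(t)+v_i(t)-w_i^j(t))^+$. Stability condition with slack $\epsilon$: there are $\gamma\ge0$ with $\sum_j\gamma_j=1$ and $\epsilon>0$ with $(1+\epsilon)\lambda_i\le\sum_j\gamma_j\mu_i^j$ for all $i$. MaxWeight selects $j\in\arg\max_j\sum_i q_i\mu_i^j$. Here $c_{\max}=0$, $\hat r_{\max}(q)=-\sum_i q_i$. The relative value function $V_\pi$ of a policy $\pi$ with average reward $J_\pi$ solves $J_\pi+V_\pi(q)=r(q)+\mathbb E_\pi[V_\pi(q(t+1))\mid q(t)=q]$ with $V_\pi(\vec 0)=0$, $\vec 0$ the empty state (equivalently, expected sum of $r(q(t))-J_\pi$ until first hitting $\vec 0$). It is assumed that MaxWeight induces an ergodic chain. *)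

From HB Require Import structures.
From mathcomp Require Import all_boot all_order all_algebra.
From mathcomp Require Import all_classical all_reals.
From mathcomp Require Import topology normedtype sequences.
Set Implicit Arguments. Unset Strict Implicit. Unset Printing Implicit Defensive.
Import Order.TTheory GRing.Theory Num.Theory numFieldNormedType.Exports.
Local Open Scope ring_scope.

(* A GSSE system with n job classes, m service options, and all arrival /
   service counts supported in {0,..,B}.
   pa i k   = P(v_i(t) = k)          (arrival pmf of class i)
   ps j i k = P(w_i^j(t) = k)        (service pmf of class i under option j)
   Arrivals/services are independent across classes and of each other, and
   i.i.d. over time, so the chain is Markov with the kernel below. *)

Definition state (n : nat) := 'I_n -> nat.

Definition is_empty (n : nat) (q : state n) : bool := [forall i, q i == 0%N].

Definition reward (R : realType) (n : nat) (q : state n) : R :=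
  - \sum_(i < n) (q i)%:R.

Definition arr_mean (R : realType) (n B : nat) (pa : 'I_n -> 'I_B.+1 -> R)
  (i : 'I_n) : R := \sum_(k < B.+1) (k : nat)%:R * pa i k.

Definition srv_mean (R : realType) (n m B : nat)
  (ps : 'I_m -> 'I_n -> 'I_B.+1 -> R) (j : 'I_m) (i : 'I_n) : R :=
  \sum_(k < B.+1) (k : nat)%:R * ps j i k.

(* one-step expectation  E[h(q(t+1)) | q(t) = q, option j],
   q_i(t+1) = (q_i + v_i - w_i^j)^+  (truncated nat subtraction) *)
Definition step_exp (R : realType) (n m B : nat)
  (pa : 'I_n -> 'I_B.+1 -> R) (ps : 'I_m -> 'I_n -> 'I_B.+1 -> R)
  (j : 'I_m) (h : state n -> R) (q : state n) : R :=
  \sum_(a : {ffun 'I_n -> 'I_B.+1}) \sum_(s : {ffun 'I_n -> 'I_B.+1})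
     ((\prod_(i < n) pa i (a i)) * (\prod_(i < n) ps j i (s i)) *
      h (fun i => (q i + a i - s i)%N)).

(* E_q[ f(q(t)) ] under the stationary policy sel *)
Fixpoint exp_at (R : realType) (n m B : nat)
  (pa : 'I_n -> 'I_B.+1 -> R) (ps : 'I_m -> 'I_n -> 'I_B.+1 -> R)
  (sel : state n -> 'I_m) (f : state n -> R) (t : nat) (q : state n) : R :=
  match t with
  | 0%N => f q
  | t'.+1 => step_exp pa ps (sel q) (exp_at pa ps sel f t') q
  end.

(* E_q[ f(q(t)) 1{sigma > t} ], sigma = inf {t >= 0 : q(t) = 0} *)
Fixpoint taboo_exp (R : realType) (n m B : nat)
  (pa : 'I_n -> 'I_B.+1 -> R) (ps : 'I_m -> 'I_n -> 'I_B.+1 -> R)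
  (sel : state n -> 'I_m) (f : state n -> R) (t : nat) (q : state n) : R :=
  if is_empty q then 0 else
  match t with
  | 0%N => f q
  | t'.+1 => step_exp pa ps (sel q) (taboo_exp pa ps sel f t') q
  end.

Definition rvf_partial (R : realType) (n m B : nat)
  (pa : 'I_n -> 'I_B.+1 -> R) (ps : 'I_m -> 'I_n -> 'I_B.+1 -> R)
  (sel : state n -> 'I_m) (J : R) (q : state n) : R ^nat :=
  series (fun t => taboo_exp pa ps sel (fun x => reward R x - J) t q).

(* relative value function V_pi(q) = E_q[ sum_{t < sigma} (r(q(t)) - J) ] *)
Definition rvf (R : realType) (n m B : nat)
  (pa : 'I_n -> 'I_B.+1 -> R) (ps : 'I_m -> 'I_n -> 'I_B.+1 -> R)
  (sel : state n -> 'I_m) (J : R) (q : state n) : R :=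
  limn (rvf_partial pa ps sel J q).

Definition maxweight (R : realType) (n m B : nat)
  (ps : 'I_m -> 'I_n -> 'I_B.+1 -> R) (sel : state n -> 'I_m) : Prop :=
  forall (q : state n) (j : 'I_m),
    \sum_(i < n) (q i)%:R * srv_mean ps j i
      <= \sum_(i < n) (q i)%:R * srv_mean ps (sel q) i.

From HB Require Import structures.
From mathcomp Require Import all_boot all_order all_algebra.
From mathcomp Require Import all_classical all_reals.
From mathcomp Require Import topology normedtype sequences.
From mathcomp Require Import ring lra.
Import Order.TTheory GRing.Theory Num.Theory numFieldNormedType.Exports.
Set Implicit Arguments.
Unset Strict Implicit.
Unset Printing Implicit Defensive.

Local Open Scope ring_scope.

(* Under MaxWeight, the stability slack makes the quadratic Lyapunov function
   V(q) = sum_i q_i^2 drift downwards: E[V(q(t+1)) | q] <= V(q) - 2 eta sum_i q_i + C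
   (this also needs every class to be served by some option, which holds since
   otherwise a single job of that class would never leave, against ergodicity).
   A comparison argument along the excursion to the empty state then bounds
   E_q[sum_{t < sigma} sum_i q_i(t)] by V(q) / eta + (C / eta) H, where H bounds
   the expected hitting time of the empty state from the finitely many states
   with sum_i q_i < C / eta (finite by ergodicity).  As the reward is
   nonpositive so is J, hence r - J >= - sum_i q_i and
   V_MW(q) >= - (sum_i q_i)^2 / eta - (C / eta) H. *)

Definition qsum (R : realType) (n : nat) (q : state n) : R :=
  \sum_(i < n) (q i)%:R.
Definition qsqsum (R : realType) (n : nat) (q : state n) : R :=
  \sum_(i < n) (q i)%:R ^+ 2.
Arguments qsum {R n}.
Arguments qsqsum {R n}.

Lemma qsum_ge0 {R : realType} (n : nat) (q : state n) : 0 <= qsum q :> R.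
Proof. exact: sumr_ge0. Qed.

Lemma qsqsum_ge0 {R : realType} (n : nat) (q : state n) : 0 <= qsqsum q :> R.
Proof. by apply: sumr_ge0 => i _; apply: sqr_ge0. Qed.

Lemma qsqsum_le_sqr {R : realType} (n : nat) (q : state n) :
  qsqsum q <= qsum q ^+ 2 :> R.
Proof.
rewrite /qsqsum /qsum [X in _ <= X]expr2 mulr_suml; apply: ler_sum => i _.
by rewrite expr2 ler_wpM2l // (bigD1 i) //= lerDl sumr_ge0.
Qed.

Lemma is_emptyF (n : nat) (q : state n) i : (0 < q i)%N -> is_empty q = false.
Proof. by move=> q_i_gt0; apply/negbTE/forallPn; exists i; rewrite -lt0n. Qed.

Lemma sqr_truncated_step (R : realDomainType) (x c d b : nat) :
  (c <= b)%N -> (d <= b)%N ->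
  (x + c - d)%:R ^+ 2
    <= x%:R ^+ 2 + b%:R ^+ 2 + 2 * x%:R * c%:R - 2 * x%:R * d%:R :> R.
Proof.
move=> cb db.
have trunc : (x + c - d)%:R ^+ 2 <= (x%:R + c%:R - d%:R) ^+ 2 :> R.
  case: (leqP d (x + c)) => h; first by rewrite natrB // natrD.
  by move/ltnW: h; rewrite -subn_eq0 => /eqP ->; rewrite expr0n sqr_ge0.
have [c0 cb'] : 0 <= c%:R :> R /\ c%:R <= b%:R :> R by rewrite ler_nat.
have [d0 db'] : 0 <= d%:R :> R /\ d%:R <= b%:R :> R by rewrite ler_nat.
apply: le_trans trunc _; nra.
Qed.

Lemma sum_pmf2_add (R : comPzRingType) (K : finType) (p p' u v : K -> R) :
  \sum_c p c = 1 -> \sum_d p' d = 1 ->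
  \sum_c \sum_d p c * p' d * (u c + v d) = \sum_c p c * u c + \sum_d p' d * v d.
Proof.
move=> p1 p'1.
transitivity (\sum_c (p c * u c * \sum_d p' d + p c * \sum_d p' d * v d)).
  apply: eq_bigr => c _; rewrite !mulr_sumr -big_split /=.
  by apply: eq_bigr => d _; ring.
under eq_bigr do rewrite p'1 mulr1.
by rewrite big_split /= -mulr_suml p1 mul1r.
Qed.

Section ProductPmf.
Variables (R : comPzRingType) (I K : finType) (p : I -> K -> R).
Hypothesis p_sum1 : forall i, \sum_k p i k = 1.

Lemma sum_prod_pmf : \sum_(a : {ffun I -> K}) \prod_i p i (a i) = 1.
Proof. by rewrite -bigA_distr_bigA big1. Qed.

Lemma sum_prod_pmf_marginal (i0 : I) (f : K -> R) :
  \sum_(a : {ffun I -> K}) (\prod_i p i (a i)) * f (a i0) = \sum_k p i0 k * f k.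
Proof.
pose F i k := p i k * (if i == i0 then f k else 1).
have prodF a : (\prod_i p i (a i)) * f (a i0) = \prod_i F i (a i).
  rewrite big_split /=; congr (_ * _).
  by rewrite (bigD1 i0) //= eqxx big1 ?mulr1 // => i /negbTE ->.
under eq_bigr do rewrite prodF.
rewrite -(bigA_distr_bigA F) (bigD1 i0) //= [X in _ * X]big1 ?mulr1.
  by apply: eq_bigr => k _; rewrite /F eqxx.
move=> i /negbTE i_neq; rewrite -(p_sum1 i).
by apply: eq_bigr => k _; rewrite /F i_neq mulr1.
Qed.

End ProductPmf.

Section StepExp.
Variables (R : realType) (n m B : nat).
Variables (pa : 'I_n -> 'I_B.+1 -> R) (ps : 'I_m -> 'I_n -> 'I_B.+1 -> R).
Hypotheses (pa_ge0 : forall i k, 0 <= pa i k)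
  (pa_sum1 : forall i, \sum_(k < B.+1) pa i k = 1).
Hypotheses (ps_ge0 : forall j i k, 0 <= ps j i k)
  (ps_sum1 : forall j i, \sum_(k < B.+1) ps j i k = 1).
Implicit Types (j : 'I_m) (q : state n) (h : state n -> R).

Lemma ler_step_exp j h1 h2 q : (forall x, h1 x <= h2 x) ->
  step_exp pa ps j h1 q <= step_exp pa ps j h2 q.
Proof.
move=> le_h; apply: ler_sum => a _; apply: ler_sum => s _.
by rewrite ler_wpM2l ?mulr_ge0 ?prodr_ge0.
Qed.

Lemma step_exp_lin j h1 h2 c1 c2 q :
  step_exp pa ps j (fun x => c1 * h1 x + c2 * h2 x) q =
  c1 * step_exp pa ps j h1 q + c2 * step_exp pa ps j h2 q.
Proof.
rewrite /step_exp !mulr_sumr -big_split; apply: eq_bigr => a _.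
rewrite !mulr_sumr -big_split; apply: eq_bigr => s _ /=; ring.
Qed.

Lemma step_exp_sum j (I : finType) (h : I -> state n -> R) q :
  step_exp pa ps j (fun x => \sum_t h t x) q = \sum_t step_exp pa ps j (h t) q.
Proof.
rewrite /step_exp; under eq_bigr do under eq_bigr do rewrite mulr_sumr.
under eq_bigr do rewrite exchange_big /=.
by rewrite exchange_big.
Qed.

Lemma step_exp_cst j c q : step_exp pa ps j (fun=> c) q = c.
Proof.
rewrite /step_exp; under eq_bigr do rewrite -mulr_suml -mulr_sumr.
rewrite (sum_prod_pmf (ps_sum1 j)); under eq_bigr do rewrite mulr1.
by rewrite -mulr_suml (sum_prod_pmf pa_sum1) mul1r.
Qed.

Lemma step_exp_coord j i (f : nat -> R) q :
  step_exp pa ps j (fun x => f (x i)) q =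
  \sum_c \sum_d pa i c * ps j i d * f (q i + c - d)%N.
Proof.
rewrite /step_exp.
under eq_bigr => a _.
  under eq_bigr do rewrite -mulrA.
  rewrite -mulr_sumr.
  rewrite (sum_prod_pmf_marginal (ps_sum1 j) i (fun d => f (q i + a i - d)%N)).
  over.
rewrite /=.
rewrite (sum_prod_pmf_marginal pa_sum1 i (fun c => \sum_d ps j i d * f (q i + c - d)%N)).
by apply: eq_bigr => c _; rewrite mulr_sumr; apply: eq_bigr => d _; rewrite mulrA.
Qed.

Lemma step_exp_sqr_coord_le j i q :
  step_exp pa ps j (fun x => (x i)%:R ^+ 2) q <=
  (q i)%:R ^+ 2 + B%:R ^+ 2 + 2 * (q i)%:R * arr_mean pa i
    - 2 * (q i)%:R * srv_mean ps j i.
Proof.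
rewrite (step_exp_coord j i (fun y => y%:R ^+ 2)).
pose u (c : 'I_B.+1) : R :=
  (q i)%:R ^+ 2 + B%:R ^+ 2 + 2 * (q i)%:R * (c : nat)%:R.
pose v (d : 'I_B.+1) : R := - (2 * (q i)%:R * (d : nat)%:R).
apply: (@le_trans _ _ (\sum_c \sum_d pa i c * ps j i d * (u c + v d))).
  apply: ler_sum => c _; apply: ler_sum => d _.
  by rewrite ler_wpM2l ?mulr_ge0 // sqr_truncated_step //; rewrite -ltnS.
rewrite sum_pmf2_add // /u /v /arr_mean /srv_mean.
rewrite le_eqVlt; apply/predU1l.
under eq_bigr do rewrite mulrDr.
rewrite big_split /= -mulr_suml pa_sum1 mul1r !mulr_sumr -sumrN.
by congr (_ + _ + _); apply: eq_bigr => c _; ring.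
Qed.

Lemma step_exp_qsqsum_le j q :
  step_exp pa ps j qsqsum q <= qsqsum q + n%:R * B%:R ^+ 2
    + 2 * \sum_i (q i)%:R * arr_mean pa i
    - 2 * \sum_i (q i)%:R * srv_mean ps j i.
Proof.
rewrite (step_exp_sum j (fun i x => (x i)%:R ^+ 2)).
apply: le_trans (ler_sum _ (fun i _ => step_exp_sqr_coord_le j i q)) _.
rewrite !sumrB !big_split /= sumr_const card_ord mulr_natl !mulr_sumr.
rewrite le_eqVlt; apply/predU1l.
by congr (_ + _ - _); apply: eq_bigr => i _; rewrite mulrA.
Qed.

End StepExp.

Section MaxWeightDrift.
Variables (R : realType) (n m B : nat).
Variables (pa : 'I_n -> 'I_B.+1 -> R) (ps : 'I_m -> 'I_n -> 'I_B.+1 -> R).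
Variables (sel : state n -> 'I_m).
Hypothesis mw : maxweight ps sel.
Implicit Types (q : state n).

Lemma maxweight_ge_mix (gamma : 'I_m -> R) q :
  (forall j, 0 <= gamma j) -> \sum_j gamma j = 1 ->
  \sum_j gamma j * \sum_i (q i)%:R * srv_mean ps j i
    <= \sum_i (q i)%:R * srv_mean ps (sel q) i.
Proof.
move=> gamma_ge0 gamma_sum1.
apply: (@le_trans _ _ (\sum_j gamma j * \sum_i (q i)%:R * srv_mean ps (sel q) i)).
  by apply: ler_sum => j _; rewrite ler_wpM2l.
by rewrite -mulr_suml gamma_sum1 mul1r.
Qed.

Lemma maxweight_ge_sum q :
  \sum_j \sum_i (q i)%:R * srv_mean ps j i
    <= m%:R * \sum_i (q i)%:R * srv_mean ps (sel q) i.
Proof.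
rewrite [X in _ <= X]mulr_natl -[m in _ *+ m]card_ord -sumr_const.
exact: ler_sum.
Qed.

Variables (gamma : 'I_m -> R) (eps smin : R).
Hypotheses (gamma_ge0 : forall j, 0 <= gamma j) (gamma_sum1 : \sum_j gamma j = 1).
Hypothesis eps_gt0 : 0 < eps.
Hypothesis stab : forall i,
  (1 + eps) * arr_mean pa i <= \sum_j gamma j * srv_mean ps j i.
Hypothesis smin_le : forall i, smin <= \sum_j srv_mean ps j i.

Lemma maxweight_drift q :
  \sum_i (q i)%:R * arr_mean pa i - \sum_i (q i)%:R * srv_mean ps (sel q) i
    <= - (eps / (1 + eps) * (smin / m%:R)) * qsum q.
Proof.
set A := \sum_i _ * arr_mean pa i; set M := \sum_i _ * srv_mean ps (sel q) i.
have m_gt0 : 0 < m%:R :> R by rewrite ltr0n (leq_ltn_trans _ (ltn_ord (sel q))).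
have arrival_le : (1 + eps) * A <= M.
  apply: le_trans (maxweight_ge_mix q gamma_ge0 gamma_sum1).
  under [X in _ <= X]eq_bigr do rewrite mulr_sumr.
  rewrite exchange_big /= /A mulr_sumr; apply: ler_sum => i _.
  rewrite mulrCA; under eq_bigr do rewrite mulrCA.
  by rewrite -mulr_sumr ler_wpM2l.
have service_ge : smin / m%:R * qsum q <= M.
  rewrite mulrAC ler_pdivrMr // [M * _]mulrC.
  apply: le_trans (maxweight_ge_sum q).
  rewrite exchange_big /= /qsum mulr_sumr; apply: ler_sum => i _.
  by rewrite -mulr_sumr mulrC ler_wpM2l.
have -> : - (eps / (1 + eps) * (smin / m%:R)) * qsum q
          = - (eps * (smin / m%:R * qsum q)) / (1 + eps).
  by ring.
set k := smin / m%:R * qsum q in service_ge *.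
have slack : 0 <= eps * (M - k) by rewrite mulr_ge0 ?subr_ge0 // ltW.
rewrite ler_pdivlMr; [nra | exact: addr_gt0].
Qed.

Hypotheses (pa_ge0 : forall i k, 0 <= pa i k)
  (pa_sum1 : forall i, \sum_(k < B.+1) pa i k = 1).
Hypotheses (ps_ge0 : forall j i k, 0 <= ps j i k)
  (ps_sum1 : forall j i, \sum_(k < B.+1) ps j i k = 1).

Lemma maxweight_qsqsum_drift q :
  step_exp pa ps (sel q) qsqsum q <=
  qsqsum q - 2 * (eps / (1 + eps) * (smin / m%:R)) * qsum q + n%:R * B%:R ^+ 2.
Proof.
have := step_exp_qsqsum_le pa_ge0 pa_sum1 ps_ge0 ps_sum1 (sel q) q.
have := maxweight_drift q; lra.
Qed.

End MaxWeightDrift.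

Section TabooSums.
Variables (R : realType) (n m B : nat).
Variables (pa : 'I_n -> 'I_B.+1 -> R) (ps : 'I_m -> 'I_n -> 'I_B.+1 -> R).
Hypotheses (pa_ge0 : forall i k, 0 <= pa i k)
  (pa_sum1 : forall i, \sum_(k < B.+1) pa i k = 1).
Hypotheses (ps_ge0 : forall j i k, 0 <= ps j i k)
  (ps_sum1 : forall j i, \sum_(k < B.+1) ps j i k = 1).
Variable sel : state n -> 'I_m.
Implicit Types (q x : state n) (f : state n -> R).

Lemma taboo_exp_lin f1 f2 c1 c2 t q :
  taboo_exp pa ps sel (fun x => c1 * f1 x + c2 * f2 x) t q =
  c1 * taboo_exp pa ps sel f1 t q + c2 * taboo_exp pa ps sel f2 t q.
Proof.
elim: t q => [|t IH] q /=; case: ifP => _; rewrite ?mulr0 ?addr0 //.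
by rewrite -step_exp_lin; congr step_exp; apply: boolp.funext.
Qed.

Lemma taboo_exp_ge0 f t q : (forall x, 0 <= f x) -> 0 <= taboo_exp pa ps sel f t q.
Proof.
move=> f_ge0; elim: t q => [|t IH] q /=; case: ifP => // _.
by rewrite -(step_exp_cst pa_sum1 ps_sum1 (sel q) 0 q) ler_step_exp.
Qed.

Lemma exp_at_le0 f t q : (forall x, f x <= 0) -> exp_at pa ps sel f t q <= 0.
Proof.
move=> f_le0; elim: t q => [|t IH] q //=.
by rewrite -(step_exp_cst pa_sum1 ps_sum1 (sel q) 0 q) ler_step_exp.
Qed.

Definition taboo_sum f T q := \sum_(t < T) taboo_exp pa ps sel f t q.

Lemma series_taboo_exp f q :
  series (fun t => taboo_exp pa ps sel f t q) = taboo_sum f ^~ q.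
Proof. by rewrite seriesEord. Qed.

Lemma taboo_sumS f T q : taboo_sum f T.+1 q =
  if is_empty q then 0 else f q + step_exp pa ps (sel q) (taboo_sum f T) q.
Proof.
rewrite /taboo_sum big_ord_recl /=; case: ifP => q_empty.
  by rewrite add0r big1 // => t _ /=; rewrite q_empty.
by rewrite (step_exp_sum _ _ (sel q) (fun t : 'I_T => taboo_exp pa ps sel f t)).
Qed.

Lemma taboo_sum_ge0 f T q : (forall x, 0 <= f x) -> 0 <= taboo_sum f T q.
Proof. by move=> f_ge0; apply: sumr_ge0 => t _; apply: taboo_exp_ge0. Qed.

Lemma nondecreasing_taboo_sum f q : (forall x, 0 <= f x) ->
  nondecreasing_seq (taboo_sum f ^~ q).
Proof.
move=> f_ge0; apply/nondecreasing_seqP => T.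
by rewrite /taboo_sum big_ord_recr /= lerDl taboo_exp_ge0.
Qed.

Lemma taboo_exp_unserved i t q :
  (forall j c, c != ord0 -> ps j i c = 0) -> (0 < q i)%N ->
  taboo_exp pa ps sel (fun=> 1) t q = 1.
Proof.
move=> unserved; elim: t q => [|t IH] q q_i_gt0 /=; rewrite (is_emptyF q_i_gt0) //.
rewrite -[RHS](step_exp_cst pa_sum1 ps_sum1 (sel q) 1 q); apply: eq_bigr => a _.
apply: eq_bigr => s _; have [s_i0|s_i_neq0] := eqVneq (s i) ord0.
  by rewrite IH //= s_i0 subn0 (leq_trans q_i_gt0) ?leq_addr.
by rewrite [\prod_(k < n) ps _ _ _](bigD1 i) //= unserved // mul0r !mulr0 !mul0r.
Qed.

Section Comparison.
Variables (eta C H : R).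
Hypotheses (eta_gt0 : 0 < eta) (C_ge0 : 0 <= C) (H_ge0 : 0 <= H).
Hypothesis drift : forall q,
  step_exp pa ps (sel q) qsqsum q <= qsqsum q - 2 * eta * qsum q + C.
Hypothesis hitting_below : forall x T,
  qsum x < C / eta -> taboo_sum (fun=> 1) T x <= H.

(* Below level C / eta the expected hitting time is at most H, and above it
   the drift pays for the constant C: capping the hitting time by H in the
   induction hypothesis makes the bound uniform in T. *)
Lemma taboo_sum_qsum_le T q :
  taboo_sum qsum T q <=
  eta^-1 * qsqsum q + C / eta * Num.min (taboo_sum (fun=> 1) T q) H.
Proof.
set D := C / eta; have D_ge0 : 0 <= D by rewrite divr_ge0 // ltW.
have V_ge0 (x : state n) : 0 <= eta^-1 * qsqsum x.
  by rewrite mulr_ge0 ?qsqsum_ge0 // invr_ge0 ltW.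
elim: T q => [|T IH] q.
  by rewrite /taboo_sum !big_ord0 min_l // mulr0 addr0.
rewrite (taboo_sumS qsum) (taboo_sumS (fun=> 1)).
case: ifP => q_empty; first by rewrite min_l // mulr0 addr0.
set w := fun x => Num.min (taboo_sum (fun=> 1) T x) H.
set P := step_exp pa ps (sel q) (taboo_sum (fun=> 1) T) q.
set W := step_exp pa ps (sel q) w q.
have step_IH : step_exp pa ps (sel q) (taboo_sum qsum T) q <=
    eta^-1 * step_exp pa ps (sel q) qsqsum q + D * W.
  by rewrite -step_exp_lin ler_step_exp.
have W_le_H : W <= H.
  by rewrite -[X in _ <= X](step_exp_cst pa_sum1 ps_sum1 (sel q) H q)
     ler_step_exp // => x; rewrite ge_min lexx orbT.
have W_le_P : W <= P by rewrite ler_step_exp // => x; rewrite ge_min lexx.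
have drift_q : eta^-1 * step_exp pa ps (sel q) qsqsum q <=
    eta^-1 * qsqsum q - 2 * qsum q + D.
  have eta_inv_ge0 : 0 <= eta^-1 by rewrite invr_ge0 ltW.
  apply: le_trans (ler_wpM2l eta_inv_ge0 (drift q)) _.
  rewrite le_eqVlt; apply/predU1l; rewrite /D; field; exact: lt0r_neq0.
have qsum_q_ge0 : 0 <= qsum q :> R := qsum_ge0 q.
have [small|large] := leP (1 + P) H.
  have : D * W <= D * P by rewrite ler_wpM2l.
  nra.
have D_le_qsum : D <= qsum q.
  rewrite leNgt; apply/negP => /(hitting_below T.+1).
  by rewrite (taboo_sumS (fun=> 1)) q_empty -/P => /(lt_le_trans large); rewrite ltxx.
have : D * W <= D * H by rewrite ler_wpM2l.
nra.
Qed.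

End Comparison.

Lemma average_reward_le0 J :
  ((fun T : nat => (\sum_(t < T.+1) exp_at pa ps sel (@reward R n) t
                      (fun _ : 'I_n => 0%N)) / (T.+1)%:R) @ \oo --> J)%classic ->
  J <= 0.
Proof.
move=> avg_J; rewrite -(cvg_lim (@Rhausdorff R) avg_J).
apply: limr_le; first by apply/cvg_ex; exists J.
apply: nearW => T; rewrite mulr_le0_ge0 ?invr_ge0 //.
by apply: sumr_le0 => t _; apply: exp_at_le0 => x; rewrite oppr_le0 sumr_ge0.
Qed.

Section Ergodic.
Hypothesis ergodic : forall q,
  cvgn (series (fun t => taboo_exp pa ps sel (fun=> 1) t q)).

Lemma cvgn_taboo_sum1 q : cvgn (taboo_sum (fun=> 1) ^~ q).
Proof. by rewrite -series_taboo_exp. Qed.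

Lemma served_of_ergodic i : 0 < \sum_j srv_mean ps j i.
Proof.
have mean_ge0 j : 0 <= srv_mean ps j i.
  by apply: sumr_ge0 => k _; rewrite mulr_ge0.
rewrite lt_def sumr_ge0 // andbT; apply/negP => /eqP means0.
have unserved j c : c != ord0 -> ps j i c = 0.
  move=> c_neq0.
  have mean0 := psumr_eq0P (fun j _ => mean_ge0 j) means0 (i := j) isT.
  have term_ge0 (k : 'I_B.+1) : true -> 0 <= (k : nat)%:R * ps j i k.
    by rewrite mulr_ge0.
  have /eqP := psumr_eq0P term_ge0 mean0 (i := c) isT.
  by rewrite mulf_eq0 pnatr_eq0 (negbTE (c_neq0 : (c : nat) != 0%N)) => /eqP.
pose q0 : state n := fun k => nat_of_bool (k == i).
have q0_i : (0 < q0 i)%N by rewrite /q0 eqxx.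
have taboo_q0 T : taboo_sum (fun=> 1) T q0 = T%:R.
  rewrite /taboo_sum (eq_bigr (fun=> 1)) ?sumr_const ?card_ord // => t _.
  by apply: taboo_exp_unserved q0_i.
have [M M_ub] := cvg_has_ub (cvgn_taboo_sum1 (q := q0)).
have /(_ (Num.truncn M).+1) : forall T, T%:R <= M.
  move=> T; rewrite -taboo_q0 -[X in X <= _]ger0_norm ?taboo_sum_ge0 //.
  by apply: M_ub; exists T.
by rewrite leNgt truncnS_gt.
Qed.

Lemma hitting_time_bounded_below (D : R) : exists2 H, 0 <= H &
  forall x T, qsum x < D -> taboo_sum (fun=> 1) T x <= H.
Proof.
pose N := Num.truncn D.
pose code (f : {ffun 'I_n -> 'I_N.+1}) : state n := fun i => f i.
exists (\big[Num.max/0]_f limn (taboo_sum (fun=> 1) ^~ (code f))).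
  exact: bigmax_ge_id.
move=> x T x_lt; set f := [ffun i => inord (x i)] : {ffun 'I_n -> 'I_N.+1}.
have -> : x = code f.
  apply: boolp.funext => i; rewrite /code ffunE inordK // -(ltr_nat R).
  apply: le_lt_trans (truncnS_gt D); apply: le_trans (ltW x_lt).
  by rewrite /qsum (bigD1 i) //= lerDl sumr_ge0.
apply: le_trans (le_bigmax _ _ f).
apply: nondecreasing_cvgn_le; last exact: cvgn_taboo_sum1.
exact: nondecreasing_taboo_sum.
Qed.

Lemma service_lower_bound :
  exists2 smin : R, 0 < smin & forall i, smin <= \sum_j srv_mean ps j i.
Proof.
pose smin := \big[Num.min/1]_i \sum_j srv_mean ps j i.
exists smin; last by move=> i; exact: bigmin_le.
apply: (big_rec (fun x : R => 0 < x)) => // i x _ x_gt0.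
by rewrite lt_min x_gt0 served_of_ergodic.
Qed.

Lemma rvf_partialE J q : rvf_partial pa ps sel J q =
  (fun T => - taboo_sum qsum T q - J * taboo_sum (fun=> 1) T q).
Proof.
rewrite /rvf_partial series_taboo_exp; apply: boolp.funext => T.
rewrite /taboo_sum mulr_sumr -sumrN -sumrB; apply: eq_bigr => t _.
have -> : (fun x => reward R x - J) = (fun x => -1 * qsum x + - J * 1).
  by apply: boolp.funext => x; rewrite /reward /qsum; ring.
by rewrite taboo_exp_lin; ring.
Qed.

Lemma rvf_ge J q K : J <= 0 -> (forall T, taboo_sum qsum T q <= K) ->
  cvgn (rvf_partial pa ps sel J q) /\ - K <= rvf pa ps sel J q.
Proof.
move=> J_le0 qsum_le.
have cvg_qsum : cvgn (taboo_sum qsum ^~ q).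
  apply: nondecreasing_is_cvgn; first exact/nondecreasing_taboo_sum/qsum_ge0.
  by exists K => _ [T _ <-].
have cvg_rvf : cvgn (rvf_partial pa ps sel J q).
  rewrite rvf_partialE; apply: is_cvgB; first exact: is_cvgN.
  exact: is_cvgMl_tmp (cvgn_taboo_sum1 (q := q)).
split => //; apply: limr_ge => //; apply: nearW => T; rewrite rvf_partialE.
have := qsum_le T; have := taboo_sum_ge0 T q (fun=> @ler01 R); nra.
Qed.

End Ergodic.

End TabooSums.

Theorem mainTheorem9 (R : realType) (n m B : nat)
  (pa : 'I_n -> 'I_B.+1 -> R) (ps : 'I_m -> 'I_n -> 'I_B.+1 -> R)
  (pa_ge0 : forall i k, 0 <= pa i k)
  (pa_sum1 : forall i, \sum_(k < B.+1) pa i k = 1)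
  (ps_ge0 : forall j i k, 0 <= ps j i k)
  (ps_sum1 : forall j i, \sum_(k < B.+1) ps j i k = 1)
  (gamma : 'I_m -> R) (eps : R)
  (gamma_ge0 : forall j, 0 <= gamma j)
  (gamma_sum1 : \sum_(j < m) gamma j = 1)
  (eps_gt0 : 0 < eps)
  (stab : forall i, (1 + eps) * arr_mean pa i
                    <= \sum_(j < m) gamma j * srv_mean ps j i)
  (sel : state n -> 'I_m) (mw : maxweight ps sel)
  (* ergodicity: the empty state is hit with finite expected time *)
  (erg : forall q : state n,
     cvgn (series (fun t => taboo_exp pa ps sel (fun _ => 1) t q)))
  (* J is the (long-run) average reward of MaxWeight *)
  (J : R)
  (hJ : ((fun T : nat =>
          (\sum_(t < T.+1) exp_at pa ps sel (@reward R n) t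
                              (fun _ : 'I_n => 0%N)) / (T.+1)%:R)
        @ \oo --> J)%classic) :
  exists c0 c1 : R, 0 < c0 /\ 0 <= c1 /\
    forall q : state n,
      cvgn (rvf_partial pa ps sel J q) /\
      - c0 * (\sum_(i < n) (q i)%:R) ^+ 2 - c1 <= rvf pa ps sel J q.
Proof.
have J_le0 := average_reward_le0 pa_ge0 pa_sum1 ps_ge0 ps_sum1 hJ.
have [smin smin_gt0 smin_le] :=
  service_lower_bound pa_ge0 pa_sum1 ps_ge0 ps_sum1 erg.
have m_gt0 : 0 < m%:R :> R.
  by rewrite ltr0n (leq_ltn_trans _ (ltn_ord (sel (fun=> 0%N)))).
pose eta := eps / (1 + eps) * (smin / m%:R); pose C : R := n%:R * B%:R ^+ 2.
have eta_gt0 : 0 < eta by rewrite !mulr_gt0 ?invr_gt0 ?addr_gt0.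
have C_ge0 : 0 <= C by rewrite mulr_ge0 ?sqr_ge0.
have drift := maxweight_qsqsum_drift mw gamma_ge0 gamma_sum1 eps_gt0 stab
  smin_le pa_ge0 pa_sum1 ps_ge0 ps_sum1.
have [H H_ge0 hitting_below] :=
  hitting_time_bounded_below pa_ge0 pa_sum1 ps_ge0 ps_sum1 erg (C / eta).
have qsum_le := taboo_sum_qsum_le pa_ge0 pa_sum1 ps_ge0 ps_sum1
  eta_gt0 C_ge0 H_ge0 drift hitting_below.
have D_ge0 : 0 <= C / eta by rewrite divr_ge0 // ltW.
exists eta^-1, (C / eta * H); split; first by rewrite invr_gt0.
split=> [|q]; first exact: mulr_ge0.
rewrite mulNr -opprD; apply: (rvf_ge pa_ge0 pa_sum1 ps_ge0 ps_sum1 erg J_le0).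
move=> T; apply: le_trans (qsum_le T q) _.
by rewrite lerD ?ler_wpM2l ?qsqsum_le_sqr ?ge_min ?lexx ?orbT // invr_ge0 ltW.
Qed.
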